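(* For every automaton $\mathcal{A}$ and every integer $k\ge1$, the language $\mathfrak{J}_{\exists\boxplus}(\mathcal{A})$ is $k\boxplus$-invariant: if $w\in\mathfrak{J}_{\exists\boxplus}(\mathcal{A})$ and $w_1\sim_{k\boxplus}w$, then $w_1\in\mathfrak{J}_{\exists\boxplus}(\mathcal{A})$. Consequently, the $\omega$-regular language $\{(ab)^\omega\}$ over $\{a,b\}$ is not equal to $\mathfrak{J}_{\exists\boxplus}(\mathcal{B})$ for any automaton $\mathcal{B}$.
   Context: Automata are nondeterministic B\''uchi automata over infinite words; $\mathfrak{L}(\mathcal{A})$ is the accepted language. For finite $x$, $\Psi(x)$ is its Parikh image. For $k\ge1$, $w\sim_{k\boxplus}w'$ means $w=x_1x_2\cdots$, $w'=y_1y_2\cdots$ with $|x_i|=|y_i|=k$ and $\Psi(x_i)=\Psi(y_i)$ for all $i$. $\mathfrak{J}_{\exists\boxplus}(\mathcal{A})=\{w\in\Sigma^\omega:\exists k\ge1\ \exists w'\sim_{k\boxplus}w,\ w'\in\mathfrak{L}(\mathcal{A})\}$. *)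

From mathcomp Require Import all_boot.
Set Implicit Arguments. Unset Strict Implicit. Unset Printing Implicit Defensive.

Definition oword (Sigma : Type) := nat -> Sigma.

Record buchi (Sigma : finType) := Buchi {
  state : finType;
  init : pred state;
  trans : state -> Sigma -> state -> bool;
  acc : pred state }.
Arguments state {Sigma} b.
Arguments init {Sigma} b _.
Arguments trans {Sigma} b _ _ _.
Arguments acc {Sigma} b _.

Definition accepting_run (Sigma : finType) (A : buchi Sigma) (w : oword Sigma)
  (r : nat -> state A) : Prop :=
  init A (r 0) /\
  (forall i, trans A (r i) (w i) (r i.+1)) /\
  (forall N, exists i, N <= i /\ acc A (r i)).

Arguments accepting_run {Sigma} A w r.

Definition accepts (Sigma : finType) (A : buchi Sigma) (w : oword Sigma) : Prop :=
  exists r, accepting_run A w r.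

Arguments accepts {Sigma} A w.

Definition parikh (Sigma : finType) (x : seq Sigma) : {ffun Sigma -> nat} :=
  [ffun a => count_mem a x].

Definition block (Sigma : Type) (k : nat) (w : oword Sigma) (i : nat) : seq Sigma :=
  [seq w (i * k + j) | j <- iota 0 k].

Definition kblock_equiv (Sigma : finType) (k : nat) (w w' : oword Sigma) : Prop :=
  forall i, parikh (block k w i) = parikh (block k w' i).

Definition J_exists_block (Sigma : finType) (A : buchi Sigma) (w : oword Sigma) : Prop :=
  exists k, 1 <= k /\ exists w', kblock_equiv k w' w /\ accepts A w'.

Arguments J_exists_block {Sigma} A w.
Arguments kblock_equiv {Sigma} k w w'.

(* Alphabet {a,b} encoded as bool: a = true, b = false. *)
Definition letter_a : bool := true.
Definition letter_b : bool := false.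

Definition ab_omega (w : oword bool) : Prop :=
  forall n, w n = (if odd n then letter_b else letter_a).

From mathcomp Require Import all_boot.
Set Implicit Arguments. Unset Strict Implicit.

(* The relation [kblock_equiv k] is an equivalence
   relation on infinite words, and it refines to every multiple of [k]:
   a block of length [m * k] is the concatenation of [m] blocks of length
   [k], and Parikh images add up under concatenation.  Hence if
   [w1 ~_k w] and [w ~_k' w'] with [w'] accepted by [A], then
   [w1 ~_(k*k') w'], so [w1] lies in [J_exists_block A] as well.
   For the second claim, every language of the form [J_exists_block B]
   is therefore [2]-block invariant, whereas (ab)^omega is not: it is
   [2]-block equivalent to (ba)^omega, which differs from it already at
   position 0.
   The file first develops segments of words and their Parikh images,
   then the equivalence and refinement properties of [kblock_equiv],
   then the invariance of [J_exists_block], and finally the theorem. *)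

Definition segment (Sigma : Type) (w : oword Sigma) (s n : nat) : seq Sigma :=
  [seq w (s + j) | j <- iota 0 n].

Lemma block_segment (Sigma : Type) (k : nat) (w : oword Sigma) (i : nat) :
  block k w i = segment w (i * k) k.
Proof. by []. Qed.

Lemma segment_cat (Sigma : Type) (w : oword Sigma) (s a b : nat) :
  segment w s (a + b) = segment w s a ++ segment w (s + a) b.
Proof.
rewrite /segment iotaD map_cat; congr (_ ++ _).
rewrite add0n -[in LHS](addn0 a) iotaDl -map_comp.
by apply: eq_map => j /=; rewrite addnA.
Qed.

Lemma parikhP (Sigma : finType) (x y : seq Sigma) :
  parikh x = parikh y <-> forall a, count_mem a x = count_mem a y.
Proof.
split=> [eq_xy a | eq_count].
  by have := congr1 (fun f : {ffun Sigma -> nat} => f a) eq_xy; rewrite !ffunE.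
by apply/ffunP => a; rewrite !ffunE.
Qed.

Lemma kblock_equiv_sym (Sigma : finType) (k : nat) (w w' : oword Sigma) :
  kblock_equiv k w w' -> kblock_equiv k w' w.
Proof. by move=> eq_ww' i; rewrite eq_ww'. Qed.

Lemma kblock_equiv_trans (Sigma : finType) (k : nat) (w1 w2 w3 : oword Sigma) :
  kblock_equiv k w1 w2 -> kblock_equiv k w2 w3 -> kblock_equiv k w1 w3.
Proof. by move=> eq12 eq23 i; rewrite eq12 eq23. Qed.

(* Block equivalence for length [k] implies it for every multiple of [k]:
   the [m]-fold segment from [j * k] is the concatenation of the blocks
   [j, ..., j + m - 1], whose letter counts agree one by one. *)
Lemma kblock_equiv_mul (Sigma : finType) (k m : nat) (w w' : oword Sigma) :
  kblock_equiv k w w' -> kblock_equiv (m * k) w w'.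
Proof.
move=> eq_ww' i; apply/parikhP => a.
have counts_mblocks j :
    count_mem a (segment w (j * k) (m * k)) =
    count_mem a (segment w' (j * k) (m * k)).
  elim: m j => [|m IHm] j; first by rewrite mul0n.
  rewrite mulSn !segment_cat !count_cat -mulSnr IHm.
  by congr (_ + _); exact: (proj1 (parikhP _ _) (eq_ww' j)).
by rewrite !block_segment mulnA; apply: counts_mblocks.
Qed.

Lemma kblock_equiv_compose (Sigma : finType) (k k' : nat) (w1 w2 w3 : oword Sigma) :
  kblock_equiv k w1 w2 -> kblock_equiv k' w2 w3 -> kblock_equiv (k * k') w1 w3.
Proof.
move=> eq12 eq23; apply: kblock_equiv_trans (kblock_equiv_mul k eq23).
by rewrite mulnC; apply: kblock_equiv_mul.
Qed.

Lemma J_exists_block_invariant (Sigma : finType) (A : buchi Sigma) (k : nat) :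
  1 <= k -> forall w w1 : oword Sigma,
  J_exists_block A w -> kblock_equiv k w1 w -> J_exists_block A w1.
Proof.
move=> k_gt0 w w1 [k' [k'_gt0 [w' [eq_w'w acc_w']]]] eq_w1w.
exists (k' * k); split; first by rewrite muln_gt0 k_gt0 k'_gt0.
exists w'; split=> //.
exact: kblock_equiv_compose eq_w'w (kblock_equiv_sym eq_w1w).
Qed.

Lemma not_J_exists_block (Sigma : finType) (L : oword Sigma -> Prop)
    (k : nat) (w w1 : oword Sigma) :
  1 <= k -> L w -> kblock_equiv k w1 w -> ~ L w1 ->
  forall B : buchi Sigma, ~ (forall v, L v <-> J_exists_block B v).
Proof.
move=> k_gt0 Lw eq_w1w notLw1 B eqL; apply: notLw1; apply/eqL.
exact: J_exists_block_invariant k_gt0 _ _ (proj1 (eqL w) Lw) eq_w1w.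
Qed.

(* (ab)^omega and (ba)^omega are [2]-block equivalent: every block of
   length 2 of either word contains one [a] and one [b]. *)
Lemma ba_ab_kblock_equiv :
  kblock_equiv 2 (fun n => odd n) (fun n => ~~ odd n).
Proof.
move=> i; apply/parikhP => a.
by rewrite /block /= !addn0 addn1 /= oddM andbF; case: a.
Qed.

Theorem mainTheorem15 :
  (forall (Sigma : finType) (A : buchi Sigma) (k : nat), 1 <= k ->
     forall w w1 : oword Sigma,
       J_exists_block A w -> kblock_equiv k w1 w -> J_exists_block A w1)
  /\
  (forall B : buchi bool,
     ~ (forall w : oword bool, ab_omega w <-> J_exists_block B w)).
Proof.
split; first exact: J_exists_block_invariant.
have ab_in : ab_omega (fun n => ~~ odd n) by move=> n; case: (odd n).
have ba_notin : ~ ab_omega (fun n => odd n) by move/(_ 0).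
exact: not_J_exists_block (erefl : 1 <= 2) ab_in ba_ab_kblock_equiv ba_notin.
Qed.
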